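(* Let $w$ be a metric on a set $V$ of $n$ points taking positive integer values such that the graph $G_1$ (pairs at distance $1$) is connected, and let $\ell$ be an integer with $0<\ell<n/2$. Then $$\mathsf{TSP}(w)\ \ge\ n+\frac17\sum_{v\in L_\ell}\mathsf{rc}(S_v).$$
   Context: $G_1$ is the graph on $V$ whose edges are the pairs $(u,v)$ with $w(u,v)=1$. $\mathsf{TSP}(w)$ is the minimum weight of a Hamiltonian cycle on $V$ under $w$. A vertex $v$ is $\ell$-light iff there is an edge $e$ of $G_1$ incident to $v$ that is a bridge of $G_1$ and such that the connected component of $G_1\setminus e$ containing $v$ has at most $\ell$ vertices; since $\ell<n/2$ such an edge (the witness $e_v$) is unique, and $S_v$ denotes the connected component of $G_1\setminus e_v$ containing $v$. A vertex $v$ is maximal $\ell$-light iff it is $\ell$-light and there is no other $\ell$-light vertex $u$ with $v\in V(S_u)$; $L_\ell$ is the set of maximal $\ell$-light vertices. For $v\in L_\ell$ and $u\in V(S_v)$, the out-reach distance is $\mathsf{ord}(u)=\min\{w(u,u'):u'\notin V(S_v)\}$. A reconfiguration of $S_v$ is a multiset $R$ of unordered pairs of vertices of $V(S_v)$ whose induced multigraph on $V(S_v)$ is connected; $V_1(R)$ is the set of vertices of odd degree in this multigraph. Its cost is $\mathsf{cost}(R)=\sum_{(u,u')\in R}w(u,u')+\frac12\sum_{u\in V_1(R)}\mathsf{ord}(u)-(|V(S_v)|-1)$, and $\mathsf{rc}(S_v)$ is the minimum cost of a reconfiguration of $S_v$. *)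

(* rationals for the half-integer costs. *)
From HB Require Import structures.
From mathcomp Require Import all_boot all_order all_algebra.
From Stdlib Require Import ClassicalEpsilon.
Set Implicit Arguments. Unset Strict Implicit. Unset Printing Implicit Defensive.
Import Order.TTheory GRing.Theory Num.Theory.

Section TSPDefs.
Variables (V : finType) (w : V -> V -> nat) (l : nat).

Definition is_int_metric : Prop :=
  [/\ forall u v, w u v = 0 <-> u = v,
      forall u v, w u v = w v u &
      forall u v x, w u x <= w u v + w v x].

Definition G1 : rel V := fun u v => w u v == 1.

Definition G1_connected : Prop := forall u v, connect G1 u v.

Definition G1_minus (a b : V) : rel V :=
  fun x y => G1 x y && ~~ (((x == a) && (y == b)) || ((x == b) && (y == a))).

Definition is_bridge (a b : V) : bool := G1 a b && ~~ connect (G1_minus a b) a b.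

Definition comp_minus (a b x : V) : {set V} := [set y | connect (G1_minus a b) x y].

Definition light_witness (v u : V) : bool :=
  is_bridge v u && (#|comp_minus v u v| <= l).

Definition light (v : V) : bool := [exists u, light_witness v u].

(* S_v (the witness edge is unique when l < n/2; we pick it) *)
Definition S (v : V) : {set V} :=
  if [pick u | light_witness v u] is Some u then comp_minus v u v else set0.

Definition max_light (v : V) : bool :=
  light v && [forall u, ~~ [&& u != v, light u & v \in S u]].

Definition L : {set V} := [set v | max_light v].

(* out-reach distance of u w.r.t. S_v : min over u' outside S_v of w u u'
   (the default value is an upper bound on all weights, so it is the true
   minimum as soon as V(S_v) <> V) *)
Definition wmax : nat := \max_(p : V * V) w p.1 p.2.
Definition ord (v u : V) : nat :=
  \big[minn/wmax]_(u' | u' \notin S v) w u u'.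

(* reconfigurations of S_v : a multiset (list) of unordered pairs of
   (distinct) vertices of V(S_v) whose induced multigraph on V(S_v) is connected *)
Definition mg_rel (R : seq (V * V)) : rel V :=
  fun x y => ((x, y) \in R) || ((y, x) \in R).

Definition is_reconf (v : V) (R : seq (V * V)) : Prop :=
  (forall p, p \in R -> [/\ p.1 \in S v, p.2 \in S v & p.1 != p.2]) /\
  (forall x y, x \in S v -> y \in S v -> connect (mg_rel R) x y).

Definition deg (R : seq (V * V)) (x : V) : nat :=
  count (fun p => p.1 == x) R + count (fun p => p.2 == x) R.

Definition V1 (v : V) (R : seq (V * V)) : {set V} :=
  [set x in S v | odd (deg R x)].

Definition cost (v : V) (R : seq (V * V)) : rat :=
  ((\sum_(p <- R) w p.1 p.2)%N%:R
  + (1 / 2%:R) * (\sum_(x in V1 v R) (ord v x)%:R)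
  - ((#|S v|)%:R - 1))%R.

Definition is_min_cost (v : V) (c : rat) : Prop :=
  (exists R, is_reconf v R /\ cost v R = c) /\
  (forall R, is_reconf v R -> (c <= cost v R)%R).

(* rc(S_v) : the minimum cost of a reconfiguration (0 if no minimum exists,
   which never happens) *)
Definition rc (v : V) : rat :=
  match excluded_middle_informative (exists c, is_min_cost v c) with
  | left H => proj1_sig (constructive_indefinite_description _ H)
  | right _ => 0
  end.

(* weight of the Hamiltonian cycle visiting the list s (a permutation of V)
   in order and returning to the start *)
Definition cycle_weight (s : seq V) : nat :=
  if s is x :: s' then \sum_(p <- zip s (rcons s' x)) w p.1 p.2 else 0.

Definition TSP : nat :=
  \big[minn/cycle_weight (enum V)]_(s <- permutations (enum V)) cycle_weight s.

End TSPDefs.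

(* Fix an optimal tour and let the excess of a vertex be the sum of (weight - 1)
   over its two tour edges, so that the total excess is 2 (TSP(w) - n).
   For a maximal light vertex v, the tour edges inside S_v together with a
   doubled set of G_1 edges joining their components form a reconfiguration
   whose odd vertices are the endpoints of tour edges crossing the boundary of
   S_v; their out-reach distances are paid for by those crossing edges.  Fewer
   G_1 edges are needed than there are tour exits from S_v, and every exit has
   weight at least 2 except possibly the bridge at v, whose use forces a
   re-entry of weight at least 2.  Hence rc(S_v) <= 5/2 excess(S_v), and as the
   S_v, v in L_l, are disjoint, summing gives sum rc <= 5 (TSP(w) - n). *)

From HB Require Import structures.
From mathcomp Require Import all_boot all_order all_algebra.
From Stdlib Require Import ClassicalEpsilon.
From mathcomp Require Import lra zify.
Import Order.TTheory GRing.Theory Num.Theory.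
Set Implicit Arguments. Unset Strict Implicit. Unset Printing Implicit Defensive.

Section Connect.
Variable T : finType.
Implicit Types (e : rel T) (A : {pred T}).

Lemma connect_cross e A x y : connect e x y -> x \in A -> y \notin A ->
  exists a b, [/\ e a b, a \in A, b \notin A & connect [rel s t in A | e s t] x a].
Proof.
move/connectP=> [p]; elim: p x => [|z p IH] x /=; first by move=> _ -> ->.
case/andP=> exz pz lst xA yA; have [zA|zA] := boolP (z \in A).
  have [a [b [eab aA bA za]]] := IH z pz lst zA yA.
  exists a, b; split=> //; apply: connect_trans za.
  by apply: connect1; rewrite /= xA zA.
by exists x, z; split.
Qed.

Lemma connect_within e v x :
  connect e v x -> connect [rel a b in connect e v | e a b] v x.
Proof.
suff H p z : connect e v z -> path e z p ->
    connect [rel a b in connect e v | e a b] z (last z p).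
  by move/connectP=> [p pth ->]; apply: H.
elim: p z => [|y p IH] z //= vz /andP[ezy pth].
have vy : connect e v y := connect_trans vz (connect1 ezy).
by apply: connect_trans (IH y vy pth); apply: connect1; rewrite /= !inE vz vy.
Qed.

Lemma mg_rel_sym (R : seq (T * T)) : symmetric (mg_rel R).
Proof. by move=> x y; rewrite /mg_rel orbC. Qed.

Lemma connect_mg_rel_sub (R R' : seq (T * T)) x y : {subset R <= R'} ->
  connect (mg_rel R) x y -> connect (mg_rel R') x y.
Proof.
move=> sub; apply: connect_sub => {}x {}y /orP[] h; apply: connect1;
by rewrite /mg_rel (sub _ h) ?orbT.
Qed.

(* Kruskal-style augmentation: each added edge of e merges the R-classes of
   two distinct points of Q, so fewer than #|Q| edges make A connected. *)
Lemma connect_augment e (A : {set T}) (Q : {set T}) (R : seq (T * T)) :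
  (forall x y, x \in A -> y \in A -> connect [rel a b in A | e a b] x y) ->
  Q != set0 -> Q \subset A ->
  (forall x, x \in A -> exists2 q, q \in Q & connect (mg_rel R) x q) ->
  exists F : seq (T * T),
    [/\ size F < #|Q|,
        forall p, p \in F -> [rel a b in A | e a b] p.1 p.2 &
        forall x y, x \in A -> y \in A -> connect (mg_rel (F ++ R)) x y].
Proof.
move=> eA; have [n] := ubnP #|Q|; elim: n Q R => // n IH Q R cQ.
case/set0Pn=> q0 q0Q QA cov; have q0A := subsetP QA _ q0Q.
have csym := sym_connect_sym (@mg_rel_sym R).
have [all|] := boolP [forall y in A, connect (mg_rel R) q0 y].
  exists [::]; split=> //; first by apply/card_gt0P; exists q0.
  move=> x y xA yA; have /forall_inP h := all.
  by apply: connect_trans (h y yA); rewrite csym; apply: h.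
case/forall_inPn=> y0 y0A ny0.
have q0P : q0 \in [pred y | connect (mg_rel R) q0 y] by rewrite inE connect0.
have [a [b [/andP[/andP[aA bA] eab] Pa nPb _]]] :=
  connect_cross (eA q0 y0 q0A y0A) q0P ny0.
rewrite !inE in Pa nPb; have [q1 q1Q bq1] := cov b bA.
have nq1 : ~~ connect (mg_rel R) q0 q1.
  by apply: contra nPb => h; apply: connect_trans h _; rewrite csym.
have q10 : q1 != q0 by apply: contraNneq nq1 => ->; apply: connect0.
have subR : {subset R <= (a, b) :: R} by move=> p pR; rewrite inE pR orbT.
have [||||F [sF eF cF]] := IH (Q :\ q1) ((a, b) :: R).
- by move: cQ; rewrite (cardsD1 q1 Q) q1Q.
- by apply/set0Pn; exists q0; rewrite in_setD1 eq_sym q10.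
- exact: subset_trans (subsetDl _ _) QA.
- move=> x xA; have [q qQ xq] := cov x xA.
  have [eq1|nq] := eqVneq q q1; last first.
    by exists q; [rewrite !inE nq qQ | exact: connect_mg_rel_sub xq].
  exists q0; first by rewrite in_setD1 eq_sym q10.
  rewrite eq1 in xq; apply: connect_trans (connect_mg_rel_sub subR xq) _.
  apply: connect_trans (connect_mg_rel_sub subR _) _; first by rewrite csym; exact: bq1.
  have ba : mg_rel ((a, b) :: R) b a by rewrite /mg_rel !inE eqxx orbT.
  apply: connect_trans (connect1 ba) _.
  by apply: (connect_mg_rel_sub subR); rewrite csym.
exists (rcons F (a, b)); split.
- by move: sF; rewrite size_rcons (cardsD1 q1 Q) q1Q.
- move=> p; rewrite mem_rcons inE => /orP[/eqP -> | /eF //].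
  by rewrite /= eab aA bA.
- by move=> x y xA yA; rewrite cat_rcons; apply: cF.
Qed.

End Connect.

Lemma leq_sum_disjoint (T I : finType) (P : {pred I}) (B : I -> {set T}) (h : T -> nat) :
  (forall i j x, i \in P -> j \in P -> x \in B i -> x \in B j -> i = j) ->
  \sum_(i in P) \sum_(x in B i) h x <= \sum_x h x.
Proof.
move=> disj; under eq_bigr do rewrite big_mkcond; rewrite exchange_big leq_sum // => x _.
have [/existsP[i /andP[iP xi]] | none] := boolP [exists i, (i \in P) && (x \in B i)].
  rewrite (bigD1 i) //= xi big1 ?addn0 // => j /andP[jP ji].
  by case: ifP => // xj; rewrite (disj _ _ _ jP iP xj xi) eqxx in ji.
rewrite big1 // => i iP; case: ifP => // xi.
by move/existsPn: none => /(_ i); rewrite iP xi.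
Qed.

Section SingleCycle.
Variables (T : finType) (f g : T -> T).
Hypotheses (gK : cancel g f) (f_orbit : forall x y, fconnect f x y).
Hypothesis card_gt2 : 2 < #|T|.

Lemma fconnect_exit (A : {pred T}) x y : x \in A -> y \notin A ->
  exists a, [/\ a \in A, f a \notin A & connect [rel s t in A | f s == t] x a].
Proof.
move=> xA yA; have [a [b [/eqP <- aA faA xa]]] := connect_cross (f_orbit x y) xA yA.
by exists a.
Qed.

Lemma f_closed_full (A : {set T}) x : x \in A ->
  (forall y, y \in A -> f y \in A) -> #|T| <= #|A|.
Proof.
move=> xA Af; rewrite -cardsT subset_leq_card //; apply/subsetP=> z _.
apply: contraT => zA; have [a [aA faA _]] := fconnect_exit xA zA.
by rewrite Af in faA.
Qed.

Lemma f_neq x : f x != x.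
Proof.
apply/eqP=> fx; have : #|T| <= #|[set x]|.
  by apply: (f_closed_full (set11 x)) => y /set1P->; rewrite fx set11.
by rewrite cards1 leqNgt (ltnW card_gt2).
Qed.

Lemma g_neq x : g x != x.
Proof. by apply/eqP=> gx; have := f_neq (g x); rewrite gK gx eqxx. Qed.

Lemma ff_neq x : f (f x) != x.
Proof.
apply/eqP=> ffx; have : #|T| <= #|[set x; f x]|.
  apply: (f_closed_full (setU11 x _)) => y /set2P[]->.
    by rewrite !inE eqxx orbT.
  by rewrite ffx !inE eqxx.
by rewrite cards2; case: (_ != _); lia.
Qed.

End SingleCycle.

Section LightComponents.
Variables (V : finType) (w : V -> V -> nat) (l : nat).
Hypothesis w_metric : is_int_metric w.

Lemma w_eq0 x y : (w x y == 0) = (x == y).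
Proof. by case: w_metric => w0 _ _; apply/eqP/eqP => /w0. Qed.

Lemma wC x y : w x y = w y x.
Proof. by case: w_metric. Qed.

Lemma G1_sym : symmetric (G1 w).
Proof. by move=> x y; rewrite /G1 wC. Qed.

Lemma G1_neq x y : G1 w x y -> x != y.
Proof. by rewrite /G1 -w_eq0 => /eqP ->. Qed.

Lemma bridge_comp_exit v u x y : is_bridge w v u ->
  x \in comp_minus w v u v -> y \notin comp_minus w v u v -> G1 w x y ->
  x = v /\ y = u.
Proof.
case/andP=> _ nvu; rewrite !inE => vx vy xy.
have [xy'|] := boolP (G1_minus w v u x y).
  by rewrite (connect_trans vx (connect1 xy')) in vy.
rewrite /G1_minus xy negbK => /orP[/andP[/eqP-> /eqP->] // | /andP[/eqP xu _]].
by rewrite xu (negbTE nvu) in vx.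
Qed.

Lemma S_light v : light w l v ->
  exists u, light_witness w l v u /\ S w l v = comp_minus w v u v.
Proof.
rewrite /light /S => /existsP[u0 u0v].
by case: pickP => [u uv | /(_ u0)]; [exists u | rewrite u0v].
Qed.

Lemma mem_S v : light w l v -> v \in S w l v.
Proof. by case/S_light=> u [_ ->]; rewrite inE connect0. Qed.

Lemma card_S_le v : light w l v -> #|S w l v| <= l.
Proof. by case/S_light=> u [/andP[_ ?] ->]. Qed.

Lemma light_exitP v : light w l v -> exists u, forall x y,
  x \in S w l v -> y \notin S w l v -> G1 w x y -> x = v /\ y = u.
Proof.
by case/S_light=> u [/andP[vu _] ->]; exists u => x y; apply: bridge_comp_exit.
Qed.

Lemma S_connected v x y : light w l v -> x \in S w l v -> y \in S w l v ->
  connect [rel a b in S w l v | G1 w a b] x y.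
Proof.
case/S_light=> u [_ ->]; set A := comp_minus w v u v.
have A_sym : symmetric [rel a b in A | G1 w a b].
  by move=> a b /=; rewrite G1_sym [(a \in A) && _]andbC.
have vA z : z \in A -> connect [rel a b in A | G1 w a b] v z.
  rewrite inE => /connect_within; apply: connect_sub => a b /andP[/andP[va vb] ab].
  by apply: connect1; move: va vb ab; rewrite /= !inE /in_mem /= => -> -> /andP[].
move=> xA yA; apply: connect_trans (vA _ yA).
by rewrite sym_connect_sym //; apply: vA.
Qed.

Lemma L_S_disjoint v1 v2 y : v1 \in L w l -> v2 \in L w l ->
  y \in S w l v1 -> y \in S w l v2 -> v1 = v2.
Proof.
rewrite !inE => /andP[l1 m1] /andP[l2 m2] y1 y2; apply/eqP/contraT => v12.
have v1S2 : v1 \notin S w l v2 by move/forallP: m1 => /(_ v2); rewrite eq_sym v12 l2.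
have v2S1 : v2 \notin S w l v1 by move/forallP: m2 => /(_ v1); rewrite v12 l1.
have [u1 [_ E1]] := S_light l1; have [u2 exit2] := light_exitP l2.
rewrite E1 inE in y1 v2S1.
have [a [b [ab aS2 bS2 v1a]]] :=
  @connect_cross _ _ [pred z | z \notin S w l v2] _ _ y1 v1S2 (introT negPn y2).
rewrite !inE negbK in aS2 bS2.
have ba : G1 w b a by rewrite G1_sym; case/andP: ab.
have [b_v2 _] := exit2 b a bS2 aS2 ba.
rewrite -b_v2 inE (connect_trans (connect_sub _ v1a) (connect1 ab)) // in v2S1.
by move=> s t /andP[_ st]; apply: connect1.
Qed.

End LightComponents.

Lemma bigminn_le (I : eqType) (r : seq I) (P : pred I) (F : I -> nat) d y :
  y \in r -> P y -> \big[minn/d]_(i <- r | P i) F i <= F y.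
Proof.
elim: r => [|i r IH] //; rewrite inE big_cons => /orP[/eqP <- -> | yr Py].
  exact: geq_minl.
by case: (P i); [apply: leq_trans (geq_minr _ _) (IH yr Py) | apply: IH].
Qed.

Section Reconfiguration.
Variables (V : finType) (w : V -> V -> nat) (l : nat) (v : V).

Lemma ord_le x y : y \notin S w l v -> ord w l v x <= w x y.
Proof. by move=> yS; apply: bigminn_le; rewrite ?mem_index_enum. Qed.

Definition cost2 (R : seq (V * V)) : nat :=
  2 * (\sum_(p <- R) w p.1 p.2) + \sum_(x in V1 w l v R) ord w l v x.

Lemma costE R : cost w l v R = ((cost2 R)%:R / 2%:R - ((#|S w l v|)%:R - 1))%R.
Proof. rewrite /cost /cost2 natrD natrM !natr_sum; lra. Qed.

(* rc is defined by choice; the minimum it picks exists because costs are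
   determined by the natural numbers [cost2], which are well ordered. *)
Lemma rc_le_cost R : is_reconf w l v R -> (rc w l v <= cost w l v R)%R.
Proof.
move=> hR; pose P m := exists R', is_reconf w l v R' /\ cost2 R' = m.
pose Pb m : bool := if excluded_middle_informative (P m) then true else false.
have PbP m : reflect (P m) (Pb m).
  by rewrite /Pb; case: excluded_middle_informative => ?; constructor.
have exPb : exists m, Pb m by exists (cost2 R); apply/PbP; exists R.
have [m /PbP [R0 [h0 e0]] m_min] := ex_minnP exPb.
have min_c : exists c, is_min_cost w l v c.
  exists (cost w l v R0); split; first by exists R0.
  move=> R' h'; have : ((cost2 R0)%:R <= (cost2 R')%:R :> rat)%R.
    by rewrite ler_nat e0; apply: m_min; apply/PbP; exists R'.
  rewrite !costE; lra.
rewrite /rc; case: excluded_middle_informative => [h|//].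
by case: (proj2_sig (constructive_indefinite_description _ h)) => _; apply.
Qed.

End Reconfiguration.

Section TourWeights.
Variables (V : finType) (w : V -> V -> nat) (f g : V -> V).
Hypothesis w_metric : is_int_metric w.
Hypotheses (fK : cancel f g) (gK : cancel g f) (f_orbit : forall x y, fconnect f x y).
Hypothesis card_gt2 : 2 < #|V|.

Definition wnext x := w x (f x).
Definition wprev x := w (g x) x.
Definition excess x := (wnext x).-1 + (wprev x).-1.

Lemma wprev_f x : wprev (f x) = wnext x.
Proof. by rewrite /wprev fK. Qed.

Lemma sum_wprev (P : pred V) :
  \sum_(x | P x) wprev x = \sum_(x | P (f x)) wnext x.
Proof. by rewrite (reindex_inj (can_inj fK)); apply: eq_bigr => x _; rewrite wprev_f. Qed.

Lemma wnext_gt0 x : 0 < wnext x.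
Proof. by rewrite lt0n /wnext (w_eq0 w_metric) eq_sym (f_neq f_orbit card_gt2). Qed.

Lemma wprev_gt0 x : 0 < wprev x.
Proof. by rewrite lt0n /wprev (w_eq0 w_metric) (g_neq gK f_orbit card_gt2). Qed.

Lemma sum_excess (A : {set V}) :
  \sum_(x in A) excess x + 2 * #|A| = \sum_(x in A) wnext x + \sum_(x in A) wprev x.
Proof.
rewrite -sum1_card big_distrr -!big_split /=; apply: eq_bigr => x _.
by have := wnext_gt0 x; have := wprev_gt0 x; rewrite /excess; lia.
Qed.

Lemma sum_excess_all :
  \sum_x excess x + 2 * #|V| = 2 * \sum_x wnext x.
Proof.
have := sum_excess [set: V]; rewrite cardsT !(eq_bigl predT _ (@in_setT V)).
by rewrite sum_wprev addnn -mul2n.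
Qed.

End TourWeights.

Section LightComponentTour.
Variables (V : finType) (w : V -> V -> nat) (l : nat) (f g : V -> V).
Hypothesis w_metric : is_int_metric w.
Hypotheses (fK : cancel f g) (gK : cancel g f) (f_orbit : forall x y, fconnect f x y).
Hypothesis card_gt2 : 2 < #|V|.
Hypothesis l_lt_card : l < #|V|.
Variable v : V.
Hypothesis v_light : light w l v.

Local Notation A := (S w l v).
Local Notation wnext := (wnext w f).
Local Notation wprev := (wprev w g).
Local Notation excess := (excess w f g).

Definition tour_in : seq (V * V) := [seq (x, f x) | x <- enum [set x in A | f x \in A]].

Definition exits : {set V} := [set x in A | f x \notin A].

Lemma S_proper : exists z, z \notin A.
Proof.
have lt : #|A| < #|V| := leq_ltn_trans (card_S_le v_light) l_lt_card.
have : ~~ ([set: V] \subset A).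
  by apply: contraL lt => /subset_leq_card; rewrite cardsT -leqNgt.
by case/subsetPn=> z _ zA; exists z.
Qed.

Lemma exits_cover x : x \in A ->
  exists2 q, q \in exits & connect (mg_rel tour_in) x q.
Proof.
move=> xA; have [z zA] := S_proper.
have [a [aA faA xa]] := fconnect_exit f_orbit xA zA.
exists a; first by rewrite inE aA.
apply: connect_sub xa => s t /andP[/andP[sA tA] /eqP fs]; apply: connect1.
by rewrite /mg_rel -fs map_f // mem_enum inE sA fs.
Qed.

Lemma exits_neq0 : exits != set0.
Proof. by have [q qQ _] := exits_cover (mem_S v_light); apply/set0Pn; exists q. Qed.

Lemma excess_exits_entries :
  \sum_(x in A | f x \notin A) (wnext x).-1 + \sum_(x in A | g x \notin A) (wprev x).-1
  <= \sum_(x in A) excess x.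
Proof.
rewrite big_split /= leq_add //.
  by rewrite [X in _ <= X](bigID (fun x => f x \notin A)) leq_addr.
by rewrite [X in _ <= X](bigID (fun x => g x \notin A)) leq_addr.
Qed.

(* Both a tour edge leaving S_v and one entering it have weight 1 only if
   both are the bridge at v, i.e. f v = g v: impossible on a tour of > 2 points. *)
Lemma light_exit_entry x y : x \in A -> f x \notin A -> wnext x = 1 ->
  y \in A -> g y \notin A -> wprev y = 1 -> False.
Proof.
move=> xA fxA /eqP wx yA gyA wy; have [u exitS] := light_exitP v_light.
have [xv fxu] := exitS _ _ xA fxA wx.
have ygy : G1 w y (g y) by rewrite /G1 (wC w_metric); apply/eqP.
have [yv gyu] := exitS _ _ yA gyA ygy.
by have := ff_neq f_orbit card_gt2 v; rewrite -xv fxu -gyu gK xv yv eqxx.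
Qed.

Lemma light_exit x : x \in exits -> wnext x = 1 -> x = v.
Proof.
rewrite inE => /andP[xA fxA] /eqP wx; have [u exitS] := light_exitP v_light.
by have [] := exitS _ _ xA fxA wx.
Qed.

Lemma card_exits_le_excess : #|exits| <= \sum_(x in A) excess x.
Proof.
have card_le (Q : {set V}) (a : V -> nat) :
    (forall x, x \in Q -> 1 < a x) -> #|Q| <= \sum_(x in Q) (a x).-1.
  by move=> Qa; rewrite -sum1_card leq_sum // => x /Qa; case: (a x) => [|[|]].
have wnext_gt1 x : wnext x != 1 -> 1 < wnext x.
  by rewrite ltn_neqAle eq_sym => ->; apply: wnext_gt0 w_metric f_orbit card_gt2 x.
apply: leq_trans excess_exits_entries.
have -> : \sum_(x in A | f x \notin A) (wnext x).-1 = \sum_(x in exits) (wnext x).-1.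
  by apply: eq_bigl => x; rewrite inE.
have [/existsP[x0 /andP[x0Q /eqP wx0]] | light_none] :=
  boolP [exists x, (x \in exits) && (wnext x == 1)]; last first.
  apply: leq_trans (leq_addr _ _); apply: card_le => x xQ; apply: wnext_gt1.
  by move/existsPn: light_none => /(_ x); rewrite xQ.
have x0v := light_exit x0Q wx0.
have [x0A fx0A] : x0 \in A /\ f x0 \notin A by move: x0Q; rewrite inE => /andP.
have [z zA] := S_proper.
have [a [aA faA _]] := @fconnect_exit _ _ f_orbit [predC A] z x0 zA (introT negPn x0A).
rewrite !inE negbK in aA faA.
have y0_entry : (f a \in A) && (g (f a) \notin A) by rewrite fK faA.
have wprev_y0 : 1 < wprev (f a).
  rewrite ltn_neqAle eq_sym (wprev_gt0 w_metric gK f_orbit card_gt2) andbT.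
  by apply/eqP => wy0; apply: light_exit_entry x0A fx0A wx0 faA _ wy0; rewrite fK.
have rest : #|exits :\ x0| <= \sum_(x in exits :\ x0) (wnext x).-1.
  apply: card_le => x; rewrite in_setD1 => /andP[xx0 xQ]; apply: wnext_gt1.
  by apply: contra xx0 => /eqP /(light_exit xQ) ->; rewrite x0v.
rewrite (cardsD1 x0) x0Q (big_setD1 x0 x0Q) wx0 (bigD1 (f a) y0_entry) /=.
lia.
Qed.

Section Augmented.
Variable F : seq (V * V).
Hypothesis F_G1 : forall p, p \in F -> [rel a b in A | G1 w a b] p.1 p.2.

(* Doubling the augmenting edges keeps their contribution to every degree even. *)
Definition reconf : seq (V * V) := tour_in ++ F ++ F.

Lemma reconf_is_reconf :
  (forall x y, x \in A -> y \in A -> connect (mg_rel (F ++ tour_in)) x y) ->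
  is_reconf w l v reconf.
Proof.
move=> conn; split=> [p|x y xA yA]; last first.
  apply: connect_mg_rel_sub (conn x y xA yA) => p.
  by rewrite !mem_cat => /orP[]->; rewrite ?orbT.
have pF : p \in F -> [/\ p.1 \in A, p.2 \in A & p.1 != p.2].
  by move/F_G1=> /andP[/andP[-> ->] /(G1_neq w_metric)].
rewrite !mem_cat => /or3P[/mapP[x] | | ] //.
by rewrite mem_enum inE => /andP[xA fxA] ->; rewrite /= xA fxA eq_sym (f_neq f_orbit).
Qed.

Lemma sum_w_reconf :
  \sum_(p <- reconf) w p.1 p.2 = \sum_(x in A | f x \in A) wnext x + 2 * size F.
Proof.
have F_size : \sum_(p <- F) w p.1 p.2 = size F.
  rewrite -sum1_size big_seq [RHS]big_seq; apply: eq_bigr => p /F_G1.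
  by case/andP=> _ /eqP.
rewrite !big_cat big_map big_enum /= F_size addnn -mul2n; congr (_ + _).
by apply: eq_bigl => x; rewrite inE.
Qed.

Lemma odd_deg_reconf x : x \in A -> odd (deg reconf x) = (f x \in A) (+) (g x \in A).
Proof.
move=> xA; set B := [set y in A | f y \in A].
have deg1 : count (fun p : V * V => p.1 == x) tour_in = (x \in B).
  by rewrite count_map -mem_enum -count_uniq_mem ?enum_uniq.
have deg2 : count (fun p : V * V => p.2 == x) tour_in = (g x \in B).
  rewrite count_map -mem_enum -count_uniq_mem ?enum_uniq //.
  by apply: eq_count => y /=; apply/eqP/eqP => [<-|->]; rewrite ?fK ?gK.
rewrite /deg !count_cat deg1 deg2 !addnn !oddD !odd_double !addbF !oddb.
by rewrite !inE xA gK xA andbT.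
Qed.

Lemma sum_ord_V1_le : \sum_(x in V1 w l v reconf) ord w l v x <=
  \sum_(x in A | f x \notin A) wnext x + \sum_(x in A | g x \notin A) wprev x.
Proof.
rewrite (eq_bigl (fun x => (x \in A) && odd (deg reconf x))) => [|x]; last by rewrite inE.
rewrite !big_mkcondr -big_split /=; apply: leq_sum => x xA.
rewrite odd_deg_reconf //; case fxA: (f x \in A); case gxA: (g x \in A) => //=.
  by rewrite add0n /wprev (wC w_metric); apply: ord_le; rewrite gxA.
by rewrite addn0; apply: ord_le; rewrite fxA.
Qed.

End Augmented.

Lemma rc_le_excess :
  (rc w l v <= 5%:R / 2%:R * (\sum_(x in A) excess x)%:R :> rat)%R.
Proof.
have exitsA : exits \subset A by apply/subsetP=> x; rewrite inE => /andP[].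
have connA x y : x \in A -> y \in A -> connect [rel a b in A | G1 w a b] x y.
  exact: S_connected.
have [F [sF F_G1 conn]] := connect_augment connA exits_neq0 exitsA exits_cover.
apply: le_trans (rc_le_cost (reconf_is_reconf F_G1 conn)) _.
have split_next : \sum_(x in A) wnext x =
    \sum_(x in A | f x \in A) wnext x + \sum_(x in A | f x \notin A) wnext x.
  exact: bigID.
have split_prev : \sum_(x in A) wprev x =
    \sum_(x in A | g x \in A) wprev x + \sum_(x in A | g x \notin A) wprev x.
  exact: bigID.
have inner : \sum_(x in A | g x \in A) wprev x = \sum_(x in A | f x \in A) wnext x.
  by rewrite (sum_wprev w fK); apply: eq_bigl => x; rewrite fK andbC.
have key : cost2 w l v (reconf F) + 2 <= 5 * \sum_(x in A) excess x + 2 * #|A|.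
  have := sum_ord_V1_le F; have := card_exits_le_excess.
  have := sum_excess w_metric gK f_orbit card_gt2 A.
  rewrite /cost2 (sum_w_reconf F_G1); lia.
rewrite costE; move: key; rewrite -(ler_nat rat) !(natrD, natrM) => key; lra.
Qed.

End LightComponentTour.

Lemma sum_rc_le_excess (V : finType) (w : V -> V -> nat) (l : nat) (f g : V -> V) :
  is_int_metric w -> cancel f g -> cancel g f -> (forall x y, fconnect f x y) ->
  2 < #|V| -> l < #|V| ->
  (\sum_(v in L w l) rc w l v <= 5%:R / 2%:R * (\sum_x excess w f g x)%:R :> rat)%R.
Proof.
move=> w_metric fK gK f_orbit card_gt2 l_lt_card.
apply: le_trans (_ : _ <= 5%:R / 2%:R *
  (\sum_(v in L w l) \sum_(x in S w l v) excess w f g x)%:R)%R _.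
  rewrite natr_sum mulr_sumr; apply: ler_sum => v; rewrite inE => /andP[v_light _].
  exact: rc_le_excess.
by rewrite ler_pM2l // ler_nat; apply: leq_sum_disjoint => i j x; apply: L_S_disjoint.
Qed.

Section Tours.
Variables (V : finType) (w : V -> V -> nat).

Lemma cycle_weight_next (s : seq V) :
  uniq s -> cycle_weight w s = \sum_(y <- s) w y (next s y).
Proof.
case: s => [|x s] s_uniq; first by rewrite /cycle_weight big_nil.
rewrite /cycle_weight.
have -> : zip (x :: s) (rcons s x) = [seq (y, next (x :: s) y) | y <- x :: s].
  apply: (@eq_from_nth _ (x, x)); first by rewrite size_zip size_map size_rcons minnn.
  move=> i; rewrite size_zip size_rcons minnn => lti.
  rewrite nth_zip ?size_rcons // (nth_map x) // nth_rcons_default.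
  by rewrite next_nth mem_nth // index_uniq.
by rewrite big_map.
Qed.

Lemma TSP_attained : exists2 s, perm_eq s (enum V) & TSP w = cycle_weight w s.
Proof.
rewrite /TSP big_seq; elim/big_ind: _ => [|m1 m2 [s1 ? ->] [s2 ? ->] | s].
- by exists (enum V).
- by rewrite /minn; case: ifP => _; [exists s1 | exists s2].
- by rewrite mem_permutations; exists s.
Qed.

End Tours.

Theorem mainTheorem7 (V : finType) (w : V -> V -> nat) (l : nat) :
  is_int_metric w ->
  G1_connected w ->
  (0 < l)%N -> (l * 2 < #|V|)%N ->
  ((#|V|)%:R + (1 / 7%:R) * \sum_(v in L w l) rc w l v <= (TSP w)%:R :> rat)%R.
Proof.
move=> w_metric _ l_gt0 l2_lt_card.
have card_gt2 : 2 < #|V| by lia.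
have l_lt_card : l < #|V| by lia.
have [s s_perm TSP_s] := TSP_attained w.
have s_uniq : uniq s by rewrite (perm_uniq s_perm) enum_uniq.
have mem_s x : x \in s by rewrite (perm_mem s_perm) mem_enum.
have f_orbit x y : fconnect (next s) x y.
  by rewrite (fconnect_cycle (cycle_next s_uniq) (mem_s x)) mem_s.
have fK := prev_next s_uniq; have gK := next_prev s_uniq.
have TSP_next : TSP w = \sum_x wnext w (next s) x.
  by rewrite TSP_s cycle_weight_next // (perm_big _ s_perm) big_enum.
have := sum_rc_le_excess w_metric fK gK f_orbit card_gt2 l_lt_card.
move/eqP: (sum_excess_all w_metric fK gK f_orbit card_gt2).
rewrite -TSP_next -(eqr_nat rat) !(natrD, natrM) => /eqP.
have : (0 <= (\sum_x excess w (next s) (prev s) x)%:R :> rat)%R by [].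
lra.
Qed.
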